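(* Let $d\ge1$, $\Omega_s<0$, $\mathbf{\Omega}_a\in\mathbb{R}^{d\times d}$ skew-symmetric, $\mathbf{\Omega}=\Omega_s\mathbf{I}+\mathbf{\Omega}_a$, $D>0$, $\Sigma_0>0$, $\mathbf{m}_0\in\mathbb{R}^d$, $T>0$, $\epsilon\ge0$, and let $\hat{\mathbf{D}}\in\mathbb{R}^{d\times d}$ be symmetric. Let $\mathbf{m}_t=e^{\mathbf{\Omega}t}\mathbf{m}_0$ and $\sigma_t^2=\Sigma_0e^{2\Omega_st}+D(e^{2\Omega_st}-1)/\Omega_s$. Set $\mathbf{P}=\int_0^T\mathbf{m}_t\mathbf{m}_t^Tdt$ with eigendecomposition $\mathbf{P}=\sum_{i=1}^d\gamma_i\mathbf{u}_i\mathbf{u}_i^T$ ($\{\mathbf{u}_i\}$ orthonormal, $\gamma_1\ge\dots\ge\gamma_d\ge0$), let $l=\mathrm{rank}(\mathbf{P})$, let $\mathbf{Q}$ be the orthogonal projector onto $\mathrm{range}(\mathbf{P})$, let $\mu_{ij}=\mathbf{u}_i^T(\hat{\mathbf{D}}-D\mathbf{I})\mathbf{u}_j$, and $$q=\int_0^T\frac{\sigma_t^4}{\sqrt{\epsilon^2/16+\sigma_t^4}}dt,\qquad r=\int_0^T\frac{\sigma_t^2}{\sqrt{\epsilon^2/16+\sigma_t^4}}dt.$$ Consider, for $\hat{\mathbf{\Omega}}\in\mathbb{R}^{d\times d}$, the unregularized function $$\mathcal{L}_\epsilon(\hat{\mathbf{\Omega}})=\mathrm{tr}\Big((\hat{\mathbf{\Omega}}-\mathbf{\Omega})^T(\hat{\mathbf{\Omega}}-\mathbf{\Omega})\mathbf{P}+\tfrac{q}{4}(\hat{\mathbf{\Omega}}+\hat{\mathbf{\Omega}}^T-2\Omega_s\mathbf{I})^2+r(\hat{\mathbf{\Omega}}+\hat{\mathbf{\Omega}}^T-2\Omega_s\mathbf{I})(\hat{\mathbf{D}}-D\mathbf{I})\Big).$$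 Then the minimizers of $\mathcal{L}_\epsilon$ over $\mathbb{R}^{d\times d}$ are exactly the matrices $$\hat{\mathbf{\Omega}}=\mathbf{\Omega}-rq^{-1}(\mathbf{I}-\mathbf{Q})(\hat{\mathbf{D}}-D\mathbf{I})(\mathbf{I}-\mathbf{Q})-2\sum_{i=1}^{l}\sum_{j=1}^{d}\frac{\gamma_i\,rq^{-1}\mu_{ij}}{2q^{-1}\gamma_i\gamma_j+\gamma_i+\gamma_j}\mathbf{u}_i\mathbf{u}_j^T+\mathbf{K},$$ where $\mathbf{K}$ ranges over skew-symmetric matrices with $\mathbf{K}\mathbf{P}=0$. The minimizer is unique if and only if $\mathrm{rank}(\mathbf{P})\ge d-1$.
   Context: This is the $\lambda=0$ (no regularization) continuous-time limit of the Sinkhorn-divergence (entropic regularization $\epsilon$) inference loss for a linear force $\hat{\mathbf{\Omega}}\mathbf{x}$ with assumed diffusion $\hat{\mathbf{D}}$ for the isotropic Ornstein–Uhlenbeck process $d\mathbf{x}=\mathbf{\Omega}\mathbf{x}dt+\sqrt{2D}d\mathbf{W}$, $\mathbf{x}_0\sim\mathcal{N}(\mathbf{m}_0,\Sigma_0\mathbf{I})$; the claim concerns the explicit function above. *)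

From HB Require Import structures.
From mathcomp Require Import all_boot all_order all_algebra.
From mathcomp Require Import all_classical all_reals all_analysis.
Set Implicit Arguments. Unset Strict Implicit. Unset Printing Implicit Defensive.
Import Order.TTheory GRing.Theory Num.Theory.
Import numFieldNormedType.Exports.
Local Open Scope ring_scope.
Local Open Scope classical_set_scope.

Section OUDefs.
Variables (R : realType) (d : nat).

Definition mxpow (A : 'M[R]_d) (k : nat) : 'M[R]_d := iter k (mulmx A) 1%:M.

Definition expmx (A : 'M[R]_d) : 'M[R]_d :=
  \matrix_(i, j) limn (fun N : nat =>
     ((\sum_(k < N) (k`!%:R)^-1 *: mxpow A k) i j : R)).

Definition mean_t (Om : 'M[R]_d) (m0 : 'cV[R]_d) (t : R) : 'cV[R]_d :=
  expmx (t *: Om) *m m0.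

Definition sigma2 (Os D Sig0 t : R) : R :=
  Sig0 * expR (2 * Os * t) + D * (expR (2 * Os * t) - 1) / Os.

Definition Pmat (Om : 'M[R]_d) (m0 : 'cV[R]_d) (T : R) : 'M[R]_d :=
  \matrix_(i, j) Rintegral (@lebesgue_measure R) `[0, T]
     (fun t => (mean_t Om m0 t) i 0 * (mean_t Om m0 t) j 0).

Definition qval (Os D Sig0 T eps : R) : R :=
  Rintegral (@lebesgue_measure R) `[0, T]
    (fun t => sigma2 Os D Sig0 t ^+ 2 /
              Num.sqrt (eps ^+ 2 / 16 + sigma2 Os D Sig0 t ^+ 2)).

Definition rval (Os D Sig0 T eps : R) : R :=
  Rintegral (@lebesgue_measure R) `[0, T]
    (fun t => sigma2 Os D Sig0 t /
              Num.sqrt (eps ^+ 2 / 16 + sigma2 Os D Sig0 t ^+ 2)).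

Definition lossL (Om P Dh : 'M[R]_d) (Os D q r : R) (X : 'M[R]_d) : R :=
  let S := X + X^T - (2 * Os)%:M in
  \tr ((X - Om)^T *m (X - Om) *m P
       + (q / 4) *: (S *m S)
       + r *: (S *m (Dh - D%:M))).

Definition is_minimizer (f : 'M[R]_d -> R) (X : 'M[R]_d) : Prop :=
  forall Y : 'M[R]_d, f X <= f Y.

End OUDefs.

From HB Require Import structures.
From mathcomp Require Import all_boot all_order all_algebra.
From mathcomp Require Import all_classical all_reals all_analysis.
From mathcomp Require Import lra ring zify.
Set Implicit Arguments. Unset Strict Implicit. Unset Printing Implicit Defensive.
Import Order.TTheory GRing.Theory Num.Theory.
Import numFieldNormedType.Exports.
Local Open Scope ring_scope.

(* Write X = Om + W and M = Dh - D I. Since Om + Om^T = 2 Os I, the loss is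
   L(Om + W) = <W, H W> + 2 r <W, M> for the trace inner product <A, B> = tr(A^T B),
   where H W = hessL P q W = W P + (q/2)(W + W^T) is self-adjoint and
   <Z, H Z> = tr(Z^T Z P) + (q/4) |Z + Z^T|^2 >= 0, with equality iff Z is skew and
   Z P = 0 (q > 0 because sigma_t^2 > 0). Hence if H Y0 + r M = 0, then
   L(Om + Y0 + Z) = L(Om + Y0) + <Z, H Z>, so the minimizers are Om + Y0 + ker H.
   In the eigenbasis of P, where P = diag(gam) and Q = diag(1_{i<l}), the equation
   H Y0 + r M = 0 decouples entrywise and is solved by the stated Om0 - Om.
   Finally ker H = 0 iff at most one gam_i vanishes; otherwise u_a u_b^T - u_b u_a^T
   for two null eigenvectors is a nonzero element of it. *)

Section Integrals.
Variable R : realType.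
Local Open Scope classical_set_scope.
Local Notation mu := (@lebesgue_measure R).

Lemma Rintegral_itv_gt0 (a b : R) (f : R -> R) : a < b ->
  {within `[a, b], continuous f} -> {in `[a, b]%R, forall x, 0 < f x} ->
  0 < \int[mu]_(x in `[a, b]) f x.
Proof.
move=> a_lt_b f_cont f_gt0.
have [c c_ab f_min] := EVT_min (ltW a_lt_b) f_cont.
have cst_int : mu.-integrable `[a, b] (EFin \o cst (f c)).
  apply: continuous_compact_integrable; first exact: segment_compact.
  by apply: continuous_subspaceT => x; exact: cst_continuous.
have f_int : mu.-integrable `[a, b] (EFin \o f).
  by apply: continuous_compact_integrable => //; exact: segment_compact.
apply: (@lt_le_trans _ _ (\int[mu]_(x in `[a, b]) cst (f c) x)).
  rewrite Rintegral_cst //= lebesgue_measure_itv /= lte_fin a_lt_b /=.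
  by apply: mulr_gt0; [exact: f_gt0 | rewrite subr_gt0].
by apply: le_Rintegral => // x /= x_ab; apply: f_min.
Qed.

Lemma sigma2_gt0 (Os D Sig0 t : R) : Os < 0 -> 0 <= D -> 0 < Sig0 -> 0 <= t ->
  0 < sigma2 Os D Sig0 t.
Proof.
move=> Os_lt0 D_ge0 Sig0_gt0 t_ge0; rewrite /sigma2.
have e_le1 : expR (2 * Os * t) <= 1 by rewrite expR_le1; nra.
apply: ltr_pwDl; first by rewrite mulr_gt0 ?expR_gt0.
apply: mulr_le0; last by rewrite invr_le0 ltW.
by rewrite mulr_ge0_le0 // subr_le0.
Qed.

Lemma continuous_sigma2 (Os D Sig0 : R) : continuous (sigma2 Os D Sig0).
Proof.
move=> t.
have cc (c : R) : {for t, continuous (fun=> c)} by exact: cst_continuous.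
have ce : {for t, continuous (fun s : R => expR (2 * Os * s))}.
  exact: continuous_comp (continuousM (cc _) cvg_id) (@continuous_expR R _).
exact: continuousD (continuousM (cc Sig0) ce)
  (continuousM (continuousM (cc D) (continuousB ce (cc 1))) (cc Os^-1)).
Qed.

Lemma qval_gt0 (Os D Sig0 T eps : R) : Os < 0 -> 0 <= D -> 0 < Sig0 -> 0 < T ->
  0 < qval Os D Sig0 T eps.
Proof.
move=> Os_lt0 D_ge0 Sig0_gt0 T_gt0.
have s_gt0 t : 0 <= t -> 0 < sigma2 Os D Sig0 t := sigma2_gt0 Os_lt0 D_ge0 Sig0_gt0.
have root_gt0 t : 0 <= t -> 0 < Num.sqrt (eps ^+ 2 / 16 + sigma2 Os D Sig0 t ^+ 2).
  by move=> /s_gt0 st_gt0; rewrite sqrtr_gt0 ltr_wpDl ?exprn_gt0 // divr_ge0 ?sqr_ge0.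
apply: Rintegral_itv_gt0 => //; last first.
  move=> t; rewrite in_itv /= => /andP[t_ge0 _].
  by rewrite divr_gt0 ?exprn_gt0 ?s_gt0 ?root_gt0.
apply: continuous_in_subspaceT => t; rewrite inE /= in_itv /= => /andP[t_ge0 _].
have cs : {for t, continuous (sigma2 Os D Sig0)} by exact: continuous_sigma2.
have cs2 := continuousM cs cs.
have ca : {for t, continuous (fun=> eps ^+ 2 / 16 : R)} by exact: cst_continuous.
have c_root := continuous_comp (continuousD ca cs2) (@sqrt_continuous R _).
apply: continuousM cs2 (continuousV _ c_root).
exact: lt0r_neq0 (root_gt0 t t_ge0).
Qed.

End Integrals.

Section Frobenius.
Variable R : realDomainType.

Lemma mxtrace_mulTmx m n (A : 'M[R]_(m, n)) :
  \tr (A^T *m A) = \sum_i \sum_k A k i ^+ 2.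
Proof. by apply: eq_bigr => i _; rewrite !mxE; apply: eq_bigr => k _; rewrite mxE. Qed.

Lemma mxtrace_mulTmx_ge0 m n (A : 'M[R]_(m, n)) : 0 <= \tr (A^T *m A).
Proof.
by rewrite mxtrace_mulTmx sumr_ge0 // => i _; rewrite sumr_ge0 // => k _; rewrite sqr_ge0.
Qed.

Lemma mxtrace_mulTmx_eq0 m n (A : 'M[R]_(m, n)) : (\tr (A^T *m A) == 0) = (A == 0).
Proof.
apply/idP/eqP => [|->]; last by rewrite mulmx0 mxtrace0.
rewrite mxtrace_mulTmx psumr_eq0 => [/allP A0|i _]; last first.
  by rewrite sumr_ge0 // => k _; rewrite sqr_ge0.
apply/matrixP => k i; have /= := A0 i (mem_index_enum i).
rewrite psumr_eq0 => [/allP/(_ k (mem_index_enum k))|k' _]; last exact: sqr_ge0.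
by rewrite sqrf_eq0 mxE => /eqP.
Qed.

End Frobenius.

Section Coordinates.
Variables (F : fieldType) (n : nat).
Implicit Types (U A B : 'M[F]_n).

Definition mxcoord U A := U^T *m A *m U.

Fact mxcoord_is_semilinear U : semilinear (mxcoord U).
Proof.
split=> [a A|A B]; rewrite /mxcoord /=; first by rewrite -scalemxAr -scalemxAl.
by rewrite mulmxDr mulmxDl.
Qed.
HB.instance Definition _ U :=
  GRing.isSemilinear.Build F 'M[F]_n 'M[F]_n _ (mxcoord U) (mxcoord_is_semilinear U).

Lemma mxcoord_tr U A : mxcoord U A^T = (mxcoord U A)^T.
Proof. by rewrite /mxcoord !trmx_mul trmxK mulmxA. Qed.

Lemma mxcoordE U A i j : mxcoord U A i j = ((col i U)^T *m A *m col j U) 0 0.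
Proof. by rewrite tr_col -!row_mul colE mulmxA -colE !mxE. Qed.

Variable U : 'M[F]_n.
Hypothesis U_orth : U^T *m U = 1%:M.

Lemma mulmxT_orth : U *m U^T = 1%:M.
Proof. exact: mulmx1C. Qed.

Lemma mxcoord_outer i j : mxcoord U (col i U *m (col j U)^T) = delta_mx i j.
Proof.
have Ucol k : U^T *m col k U = delta_mx k 0 by rewrite colE mulmxA U_orth mul1mx.
have colU k : (col k U)^T *m U = delta_mx 0 k.
  by rewrite -[U in _ *m U]trmxK -trmx_mul Ucol trmx_delta.
by rewrite /mxcoord !mulmxA Ucol -mulmxA colU mul_delta_mx.
Qed.

Lemma mxcoord_outer_sum (p : pred 'I_n) (c : 'I_n -> 'I_n -> F) :
  mxcoord U (\sum_(i | p i) \sum_j c i j *: (col i U *m (col j U)^T))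
  = \matrix_(i, j) ((p i)%:R * c i j).
Proof.
rewrite raddf_sum /= [RHS]matrix_sum_delta big_mkcond /=; apply: eq_bigr => i _.
have [pi|npi] := boolP (p i).
  rewrite raddf_sum /=; apply: eq_bigr => j _.
  by rewrite linearZ /= mxcoord_outer mxE pi mul1r.
by rewrite big1 // => j _; rewrite mxE (negbTE npi) mul0r scale0r.
Qed.

Lemma mxcoordM A B : mxcoord U (A *m B) = mxcoord U A *m mxcoord U B.
Proof. by rewrite /mxcoord !mulmxA -(mulmxA _ U) mulmxT_orth mulmx1. Qed.

Lemma mxcoord1 : mxcoord U 1%:M = 1%:M.
Proof. by rewrite /mxcoord mulmx1. Qed.

Lemma mxcoordK A : U *m mxcoord U A *m U^T = A.
Proof. by rewrite /mxcoord !mulmxA mulmxT_orth mul1mx -mulmxA mulmxT_orth mulmx1. Qed.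

Lemma mxcoordVK A : mxcoord U (U *m A *m U^T) = A.
Proof. by rewrite /mxcoord !mulmxA U_orth mul1mx -mulmxA U_orth mulmx1. Qed.

Lemma mxcoord_inj : injective (mxcoord U).
Proof. by move=> A B eqAB; rewrite -(mxcoordK A) eqAB mxcoordK. Qed.

Lemma mxcoord_eqmx A B : (A == B)%MS -> (mxcoord U A == mxcoord U B)%MS.
Proof.
have sub C D : (C <= D)%MS -> (mxcoord U C <= mxcoord U D)%MS.
  by case/submxP=> X ->; rewrite mxcoordM submxMl.
by case/andP=> /sub AB /sub BA; apply/andP.
Qed.

Lemma mxrank_mxcoord A : \rank (mxcoord U A) = \rank A.
Proof.
have [UT_unit U_unit] := mulmx1_unit U_orth.
rewrite /mxcoord mxrankMfree ?row_free_unit // -mxrank_tr trmx_mul.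
by rewrite mxrankMfree ?row_free_unit ?unitmx_tr // mxrank_tr.
Qed.

End Coordinates.

Lemma nonincreasing_gt0_prefix (R : realDomainType) n (g : 'I_n -> R) :
  (forall i j : 'I_n, (i <= j)%N -> g j <= g i) ->
  exists2 c, (c <= n)%N & forall k : 'I_n, (0 < g k) = (k < c)%N.
Proof.
move=> g_noninc; set c := find (fun k => g k <= 0) (enum 'I_n).
exists c; first by rewrite -[n in (_ <= n)%N]size_enum_ord find_size.
move=> k; case: ltnP => [k_lt_c|c_le_k].
  by have := before_find k k_lt_c; rewrite nth_ord_enum /= leNgt => /negbFE.
have c_lt_n : (c < n)%N := leq_ltn_trans c_le_k (ltn_ord k).
have := nth_find k (_ : has (fun k => g k <= 0) (enum 'I_n)).
rewrite has_find size_enum_ord => /(_ c_lt_n).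
set kc := nth k _ c => gkc_le0; rewrite ltNge (le_trans _ gkc_le0) //.
by apply: g_noninc; rewrite /kc nth_enum_ord.
Qed.

Section DiagonalMatrices.
Variables (F : fieldType) (n : nat).

Lemma rank_diag_mx_prefix (g : 'rV[F]_n) c : (c <= n)%N ->
  (forall k : 'I_n, (g 0 k != 0) = (k < c)%N) -> \rank (diag_mx g) = c.
Proof.
move=> c_le_n g_nz; set g' := \row_k (if (k < c)%N then g 0 k else 1).
have -> : diag_mx g = pid_mx c *m diag_mx g'.
  apply/matrixP => i j; rewrite mul_mx_diag !mxE.
  have [<-|ij] := eqVneq i j; last first.
    by rewrite (negbTE ij : (i == j :> nat) = false) mul0r.
  rewrite eqxx /=; case: ltnP => c_i; first by rewrite mul1r.
  have /negbNE/eqP -> : ~~ (g 0 i != 0) by rewrite g_nz -leqNgt.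
  by rewrite mul0rn mul0r.
rewrite mxrankMfree ?rank_pid_mx // row_free_unit unitmxE det_diag unitfE.
by apply/prodf_neq0 => k _; rewrite mxE; case: ifP => [k_lt_c|_]; rewrite ?g_nz ?oner_eq0.
Qed.

Lemma projector_diag_mx (g : 'rV[F]_n) (Q : 'M[F]_n) :
  Q^T = Q -> Q *m Q = Q -> (Q == diag_mx g)%MS ->
  Q = diag_mx (\row_k (g 0 k != 0)%:R).
Proof.
move=> Q_sym Q_idem /andP[/submxP[X QX] /submxP[Y gY]].
set e := \row_k _.
have gQ : Q *m diag_mx g = diag_mx g.
  have gYT : diag_mx g = Q *m Y^T by rewrite -tr_diag_mx gY trmx_mul Q_sym.
  by rewrite [in LHS]gYT mulmxA Q_idem -gYT.
have ge : diag_mx g *m diag_mx e = diag_mx g.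
  rewrite mulmx_diag; congr diag_mx; apply/rowP => k; rewrite !mxE.
  by have [->|_] := eqVneq (g 0 k) 0; rewrite ?mul0r ?mulr1.
have gVg : diag_mx g *m diag_mx (\row_k (g 0 k)^-1) = diag_mx e.
  rewrite mulmx_diag; congr diag_mx; apply/rowP => k; rewrite !mxE.
  by have [->|/mulfV ->] := eqVneq (g 0 k) 0; rewrite ?mul0r.
have Qe : Q *m diag_mx e = Q by rewrite QX -mulmxA ge.
by rewrite -Qe -gVg mulmxA gQ.
Qed.

End DiagonalMatrices.

Section QuadraticPart.
Variables (R : numFieldType) (n : nat).
Implicit Types (P S W Y Z : 'M[R]_n) (q : R).

Definition hessL P q W := W *m P + (q / 2) *: (W + W^T).

Lemma trmx_addtr W : (W + W^T)^T = W + W^T.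
Proof. by rewrite raddfD /= trmxK addrC. Qed.

Lemma hessLD P q Y Z : hessL P q (Y + Z) = hessL P q Y + hessL P q Z.
Proof.
by rewrite /hessL mulmxDl (raddfD (@trmx _ _ _)) [Y + Z + _]addrACA scalerDr addrACA.
Qed.

Lemma hessL_selfadj P q Y Z : P^T = P ->
  \tr (Z^T *m hessL P q Y) = \tr (Y^T *m hessL P q Z).
Proof.
move=> P_sym; rewrite /hessL !mulmxDr !mxtraceD -!scalemxAr !mxtraceZ.
have -> : \tr (Z^T *m (Y *m P)) = \tr (Y^T *m (Z *m P)).
  by rewrite -mxtrace_tr !trmx_mul trmxK P_sym -mulmxA mxtrace_mulC mulmxA.
rewrite !mulmxDr !mxtraceD (mxtrace_mulC Z^T Y^T).
by rewrite -[\tr (Z^T *m Y)]mxtrace_tr trmx_mul trmxK.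
Qed.

Lemma mxtrace_addtr_mul W S : S^T = S -> \tr ((W + W^T) *m S) = 2 * \tr (W^T *m S).
Proof.
move=> S_sym; have WS : \tr (W *m S) = \tr (W^T *m S).
  by rewrite -mxtrace_tr trmx_mul S_sym mxtrace_mulC.
by rewrite mulmxDl mxtraceD WS mulr2n mulrDl mul1r.
Qed.

Lemma hessL_form P q Z : \tr (Z^T *m hessL P q Z)
  = \tr (Z^T *m Z *m P) + q / 4 * \tr ((Z + Z^T)^T *m (Z + Z^T)).
Proof.
rewrite /hessL mulmxDr mxtraceD -scalemxAr mxtraceZ mulmxA trmx_addtr.
by rewrite mxtrace_addtr_mul ?trmx_addtr //; field.
Qed.

End QuadraticPart.

Section Loss.
Variables (R : realType) (n : nat).
Implicit Types (P W Y Z Om Dh : 'M[R]_n) (q r Os D : R).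

Lemma lossL_shift Om P Dh Os D q r W :
  Om + Om^T = (2 * Os)%:M -> Dh^T = Dh ->
  lossL Om P Dh Os D q r (Om + W)
  = \tr (W^T *m hessL P q W) + 2 * r * \tr (W^T *m (Dh - D%:M)).
Proof.
move=> Om_sym Dh_sym; rewrite /lossL [Om + W - Om]addrC addKr.
have -> : Om + W + (Om + W)^T - (2 * Os)%:M = W + W^T.
  by rewrite -Om_sym [(Om + W)^T]raddfD /= addrACA addrC addrK.
have M_sym : (Dh - D%:M)^T = Dh - D%:M by rewrite raddfB /= Dh_sym tr_scalar_mx.
rewrite /hessL [W^T *m (_ + _)]mulmxDr -scalemxAr !mxtraceD !mxtraceZ mulmxA.
by rewrite !mxtrace_addtr_mul ?trmx_addtr //; field.
Qed.

Lemma lossL_expand Om P Dh Os D q r Y Z :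
  Om + Om^T = (2 * Os)%:M -> P^T = P -> Dh^T = Dh ->
  lossL Om P Dh Os D q r (Om + Y + Z)
  = lossL Om P Dh Os D q r (Om + Y)
    + 2 * \tr (Z^T *m (hessL P q Y + r *: (Dh - D%:M))) + \tr (Z^T *m hessL P q Z).
Proof.
move=> Om_sym P_sym Dh_sym; rewrite -addrA !lossL_shift // hessLD.
have := hessL_selfadj q Z Y P_sym.
move: (hessL P q Y) (hessL P q Z) (Dh - D%:M) => HY HZ M HYZ.
rewrite mulmxDr [(Y + Z)^T]raddfD /= !mulmxDl mulmxDr !mxtraceD -scalemxAr mxtraceZ HYZ.
ring.
Qed.

Lemma is_minimizer_shift (f B : 'M[R]_n -> R) X0 :
  (forall Z, 0 <= B Z) -> (forall Z, f (X0 + Z) = f X0 + B Z) ->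
  forall X, is_minimizer f X <-> B (X - X0) = 0.
Proof.
move=> B_ge0 fE X; have shift Y : Y = X0 + (Y - X0) by rewrite addrC subrK.
split => [minX|BX0 Y].
  apply/eqP; rewrite eq_le B_ge0 andbT -(lerD2l (f X0)) addr0 -fE -shift.
  exact: minX.
by rewrite [X]shift fE BX0 addr0 [Y]shift fE lerDl.
Qed.

Lemma is_minimizer_unique (f B : 'M[R]_n -> R) X0 :
  (forall Z, 0 <= B Z) -> (forall Z, f (X0 + Z) = f X0 + B Z) ->
  (forall X Y, is_minimizer f X -> is_minimizer f Y -> X = Y) <->
  (forall Z, B Z = 0 -> Z = 0).
Proof.
move=> B_ge0 fE; have minE := is_minimizer_shift B_ge0 fE.
split => [min_uniq Z BZ0|B_inj X Y]; last first.
  by move=> /minE/B_inj/eqP + /minE/B_inj/eqP; rewrite !subr_eq0 => /eqP-> /eqP->.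
have B0 : B 0 = 0 by apply: (addrI (f X0)); rewrite -fE !addr0.
apply: (addrI X0); rewrite addr0; apply: min_uniq; apply/minE.
  by rewrite addrC addKr.
by rewrite subrr.
Qed.

End Loss.

Section PositiveSemidefinite.
Variables (R : realFieldType) (n : nat) (U P : 'M[R]_n) (gam : 'I_n -> R).
Hypotheses (P_def : P = \sum_k gam k *: (col k U *m (col k U)^T))
  (gam_ge0 : forall k, 0 <= gam k).
Implicit Types Z : 'M[R]_n.

Lemma spectral_sym : P^T = P.
Proof.
rewrite P_def raddf_sum /=; apply: eq_bigr => k _.
by rewrite linearZ /= trmx_mul trmxK.
Qed.

Lemma mxtrace_spectral Z :
  \tr (Z^T *m Z *m P) = \sum_k gam k * \tr ((Z *m col k U)^T *m (Z *m col k U)).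
Proof.
rewrite P_def mulmx_sumr raddf_sum /=; apply: eq_bigr => k _.
by rewrite -scalemxAr mxtraceZ !mulmxA mxtrace_mulC trmx_mul !mulmxA.
Qed.

Lemma mxtrace_spectral_ge0 Z : 0 <= \tr (Z^T *m Z *m P).
Proof.
by rewrite mxtrace_spectral sumr_ge0 // => k _; rewrite mulr_ge0 ?mxtrace_mulTmx_ge0.
Qed.

Lemma hessL_ge0 q Z : 0 <= q -> 0 <= \tr (Z^T *m hessL P q Z).
Proof.
move=> q_ge0; rewrite hessL_form addr_ge0 ?mxtrace_spectral_ge0 //.
by rewrite mulr_ge0 ?divr_ge0 ?mxtrace_mulTmx_ge0.
Qed.

Lemma hessL_eq0 q Z : 0 < q ->
  \tr (Z^T *m hessL P q Z) = 0 <-> Z^T = - Z /\ Z *m P = 0.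
Proof.
move=> q_gt0; rewrite hessL_form; split => [/eqP|[Z_skew ZP0]]; last first.
  by rewrite -mulmxA ZP0 mulmx0 mxtrace0 Z_skew subrr mulmx0 mxtrace0 mulr0 addr0.
rewrite paddr_eq0 ?mxtrace_spectral_ge0 ?mulr_ge0 ?divr_ge0 ?mxtrace_mulTmx_ge0 ?ltW //.
have q4_neq0 : q / 4 != 0 by rewrite gt_eqF // divr_gt0.
rewrite mulf_eq0 (negbTE q4_neq0) /= mxtrace_mulTmx_eq0.
case/andP => /eqP ZZP0; rewrite addr_eq0 => /eqP Z_skew.
split; first by rewrite -[Z^T]opprK -Z_skew.
move: ZZP0; rewrite mxtrace_spectral => /psumr_eq0P ZZP0.
rewrite P_def mulmx_sumr big1 // => k _.
have /eqP := ZZP0 (fun k _ => mulr_ge0 (gam_ge0 k) (mxtrace_mulTmx_ge0 _)) k isT.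
rewrite mulf_eq0 mxtrace_mulTmx_eq0 => /orP[/eqP->|/eqP Zk0]; first by rewrite scale0r mulmx0.
by rewrite -scalemxAr mulmxA Zk0 mul0mx scaler0.
Qed.

End PositiveSemidefinite.

Section Eigenbasis.
Variables (R : realFieldType) (n : nat) (U P : 'M[R]_n) (gam : 'I_n -> R).
Hypotheses (U_orth : U^T *m U = 1%:M)
  (P_def : P = \sum_k gam k *: (col k U *m (col k U)^T))
  (gam_ge0 : forall k, 0 <= gam k).

Lemma mxcoord_spectral : mxcoord U P = diag_mx (\row_k gam k).
Proof.
rewrite P_def raddf_sum diag_mx_sum_delta /=; apply: eq_bigr => k _.
by rewrite linearZ /= mxcoord_outer // mxE.
Qed.

Lemma spectral_gt0_rank : (forall i j : 'I_n, (i <= j)%N -> gam j <= gam i) ->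
  forall k, (0 < gam k) = (k < \rank P)%N.
Proof.
move=> gam_noninc; have [c c_le_n gam_gt0] := nonincreasing_gt0_prefix gam_noninc.
suff -> : \rank P = c by [].
rewrite -(mxrank_mxcoord U_orth) mxcoord_spectral (rank_diag_mx_prefix c_le_n) // => k.
by rewrite mxE -gam_gt0 lt0r gam_ge0 andbT.
Qed.

Variable l : nat.
Hypothesis gam_gt0 : forall k, (0 < gam k) = (k < l)%N.

Let gam_eq0 (k : 'I_n) : (l <= k)%N -> gam k = 0.
Proof. by move=> l_le_k; apply/eqP; rewrite eq_le gam_ge0 andbT leNgt gam_gt0 -leqNgt. Qed.

Lemma mxcoord_projector Q : Q^T = Q -> Q *m Q = Q -> (Q == P)%MS ->
  mxcoord U Q = diag_mx (\row_k (k < l)%:R).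
Proof.
move=> Q_sym Q_idem QP; rewrite (@projector_diag_mx _ _ (\row_k gam k) (mxcoord U Q)).
- by congr diag_mx; apply/rowP => k; rewrite !mxE -gam_gt0 lt0r gam_ge0 andbT.
- by rewrite -mxcoord_tr Q_sym.
- by rewrite -mxcoordM // Q_idem.
- by rewrite -mxcoord_spectral mxcoord_eqmx.
Qed.

Lemma skew_annihilator_eq0 :
  (forall K, K^T = - K -> K *m P = 0 -> K = 0) <-> (n - 1 <= l)%N.
Proof.
have P_coord : P = U *m diag_mx (\row_k gam k) *m U^T.
  by rewrite -mxcoord_spectral mxcoordK.
split => [K_eq0|l_large K K_skew KP0]; last first.
  apply: (mxcoord_inj U_orth); rewrite linear0; set C := mxcoord U K.
  have C_anti i j : C j i = - C i j.
    have /matrixP/(_ i j) : C^T = - C by rewrite -mxcoord_tr K_skew linearN.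
    by rewrite [LHS]mxE [RHS]mxE.
  have C_col (k j : 'I_n) : (j < l)%N -> C k j = 0.
    move=> j_lt_l; have /matrixP/(_ k j) := mxcoordM U_orth K P.
    rewrite KP0 linear0 mxcoord_spectral mul_mx_diag !mxE => /esym/eqP.
    by rewrite mulf_eq0 (gt_eqF (_ : 0 < gam j)) ?gam_gt0 // orbF => /eqP.
  apply/matrixP => i j; rewrite [RHS]mxE.
  have [j_lt_l|l_le_j] := ltnP j l; first exact: C_col.
  have [i_lt_l|l_le_i] := ltnP i l.
    by rewrite C_anti C_col ?oppr0.
  have -> : i = j by apply: val_inj; move: (ltn_ord i) (ltn_ord j) => /=; lia.
  by have /eqP := C_anti j j; rewrite -addr_eq0 -mulr2n mulrn_eq0 => /eqP.
rewrite leqNgt; apply/negP => l_small.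
have a_lt_n : (n - 1 < n)%N by lia.
have b_lt_n : (n - 2 < n)%N by lia.
pose a := Ordinal a_lt_n; pose b := Ordinal b_lt_n.
have a_neq_b : a != b by apply/eqP => /(congr1 val) /=; lia.
pose E : 'M[R]_n := delta_mx a b - delta_mx b a.
have E_skew : E^T = - E by rewrite raddfB /= !trmx_delta opprB.
have E_ann : E *m diag_mx (\row_k gam k) = 0.
  apply/matrixP => i j; rewrite mul_mx_diag !mxE.
  have [->|jb] := eqVneq j b; first by rewrite gam_eq0 ?mulr0 //=; lia.
  have [->|ja] := eqVneq j a; first by rewrite gam_eq0 ?mulr0 //=; lia.
  by rewrite !andbF subrr mul0r.
have : U *m E *m U^T = 0.
  apply: K_eq0; first by rewrite !trmx_mul trmxK E_skew mulNmx mulmxN mulmxA.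
  by rewrite P_coord !mulmxA -(mulmxA _ U^T) U_orth mulmx1 -(mulmxA _ E) E_ann mulmx0 mul0mx.
move/(congr1 (mxcoord U)); rewrite mxcoordVK // linear0 => /matrixP/(_ a b).
by rewrite !mxE !eqxx (negbTE a_neq_b) /= subr0 => /eqP; rewrite oner_eq0.
Qed.

Lemma hessL_stationary (Q M : 'M[R]_n) (q r : R) :
  Q^T = Q -> Q *m Q = Q -> (Q == P)%MS -> M^T = M -> 0 < q ->
  hessL P q (- (r / q) *: ((1%:M - Q) *m M *m (1%:M - Q))
             - 2 *: \sum_(i < n | (i < l)%N) \sum_(j < n)
                 ((gam i * (r / q) * mxcoord U M i j)
                    / (2 / q * gam i * gam j + gam i + gam j))
                 *: (col i U *m (col j U)^T))
  + r *: M = 0.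
Proof.
move=> Q_sym Q_idem QP M_sym q_gt0; apply: (mxcoord_inj U_orth).
have coQ : mxcoord U (1%:M - Q) = diag_mx (\row_k (l <= k)%:R).
  rewrite linearB /= mxcoord1 // mxcoord_projector // -diag_const_mx -linearB /=.
  by congr diag_mx; apply/rowP => k; rewrite !mxE; case: ltnP; rewrite ?subrr ?subr0.
set S := \sum_(i < n | _) _; set Y := _ - 2 *: S.
have coY : mxcoord U Y = - (r / q) *: (diag_mx (\row_k (l <= k)%:R) *m mxcoord U M
                                          *m diag_mx (\row_k (l <= k)%:R))
    - 2 *: \matrix_(i, j) ((i < l)%:R * ((gam i * (r / q) * mxcoord U M i j)
                                      / (2 / q * gam i * gam j + gam i + gam j))).
  by rewrite /Y linearB !linearZ /= !mxcoordM // coQ mxcoord_outer_sum.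
clearbody Y; rewrite linear0 /hessL !linearD !linearZ /= mxcoordM // mxcoord_spectral.
rewrite mxcoord_tr coY; have := mxcoord_tr U M; rewrite M_sym.
move: (mxcoord U M) => Mc Mc_sym.
rewrite !mul_mx_diag mul_diag_mx; apply/matrixP => a b; rewrite !mxE.
have -> : Mc b a = Mc a b by rewrite [in LHS]Mc_sym mxE.
have q_neq0 : q != 0 by rewrite gt_eqF.
have [a_lt_l|l_le_a] := ltnP a l; have [b_lt_l|l_le_b] := ltnP b l.
- have ga_gt0 : 0 < gam a by rewrite gam_gt0.
  have gb_gt0 : 0 < gam b by rewrite gam_gt0.
  rewrite /=; field.
  by rewrite q_neq0 gt_eqF // !addr_gt0 // !mulr_gt0.
- rewrite (gam_eq0 l_le_b) /= !mul0r; field.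
  by rewrite q_neq0 gt_eqF // gam_gt0.
- rewrite (gam_eq0 l_le_a) /= !mul0r; field.
  by rewrite q_neq0 gt_eqF // gam_gt0.
- by rewrite (gam_eq0 l_le_a) (gam_eq0 l_le_b) /= mul0r; field.
Qed.

End Eigenbasis.

Theorem mainTheorem3 (R : realType) (d : nat)
  (Os : R) (Oa : 'M[R]_d) (D Sig0 T eps : R) (m0 : 'cV[R]_d) (Dh : 'M[R]_d)
  (gam : 'I_d -> R) (U Q : 'M[R]_d) :
  (0 < d)%N -> Os < 0 -> Oa^T = - Oa -> 0 < D -> 0 < Sig0 -> 0 < T -> 0 <= eps ->
  Dh^T = Dh ->
  let Om := Os%:M + Oa in
  let P := Pmat Om m0 T in
  (* eigendecomposition P = sum_i gam_i u_i u_i^T, u_i = col i U orthonormal *)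
  U^T *m U = 1%:M ->
  P = \sum_(i < d) gam i *: (col i U *m (col i U)^T) ->
  (forall i j : 'I_d, (i <= j)%N -> gam j <= gam i) ->
  (forall i : 'I_d, 0 <= gam i) ->
  (* Q = orthogonal projector onto range(P) *)
  Q^T = Q -> Q *m Q = Q -> (Q == P)%MS ->
  let l := \rank P in
  let mu := fun i j : 'I_d => ((col i U)^T *m (Dh - D%:M) *m col j U) 0 0 in
  let q := qval Os D Sig0 T eps in
  let r := rval Os D Sig0 T eps in
  let L := lossL Om P Dh Os D q r in
  let Om0 := Om - (r / q) *: ((1%:M - Q) *m (Dh - D%:M) *m (1%:M - Q))
             - 2 *: \sum_(i < d | (i < l)%N) \sum_(j < d)
                 ((gam i * (r / q) * mu i j)
                    / (2 / q * gam i * gam j + gam i + gam j))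
                 *: (col i U *m (col j U)^T) in
  (forall X : 'M[R]_d,
     is_minimizer L X <->
     exists K : 'M[R]_d, K^T = - K /\ K *m P = 0 /\ X = Om0 + K)
  /\
  ((forall X Y : 'M[R]_d, is_minimizer L X -> is_minimizer L Y -> X = Y)
     <-> (d - 1 <= l)%N).
Proof.
move=> _ Os_lt0 Oa_skew D_gt0 Sig0_gt0 T_gt0 _ Dh_sym Om P U_orth P_def gam_noninc
  gam_ge0 Q_sym Q_idem QP l mu q r L Om0.
have q_gt0 : 0 < q := qval_gt0 eps Os_lt0 (ltW D_gt0) Sig0_gt0 T_gt0.
have gam_gt0 := spectral_gt0_rank U_orth P_def gam_ge0 gam_noninc.
have M_sym : (Dh - D%:M)^T = Dh - D%:M by rewrite raddfB /= Dh_sym tr_scalar_mx.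
have Om_sym : Om + Om^T = (2 * Os)%:M.
  by rewrite raddfD /= tr_scalar_mx Oa_skew addrACA subrr addr0 mulr_natl mulr2n raddfD.
have stat := hessL_stationary U_orth P_def gam_ge0 gam_gt0 r Q_sym Q_idem QP M_sym q_gt0.
move: stat; set Y0 := (X in hessL _ _ X) => stat.
have Om0E : Om0 = Om + Y0.
  rewrite /Om0 /Y0 /mu -addrA scaleNr.
  by under eq_bigr do under eq_bigr do rewrite -mxcoordE.
have L_shift Z : L (Om0 + Z) = L Om0 + \tr (Z^T *m hessL P q Z).
  by rewrite Om0E /L lossL_expand // ?(spectral_sym P_def) // stat mulmx0 mxtrace0 mulr0 addr0.
have B_ge0 Z := hessL_ge0 P_def gam_ge0 Z (ltW q_gt0).
split => [X|].
  rewrite (is_minimizer_shift B_ge0 L_shift) (hessL_eq0 P_def) //.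
  split => [[K_skew KP0]|[K [K_skew [KP0 ->]]]]; last by rewrite addrC addKr.
  by exists (X - Om0); do !split => //; rewrite addrC subrK.
rewrite (is_minimizer_unique B_ge0 L_shift).
rewrite -(skew_annihilator_eq0 U_orth P_def gam_ge0 gam_gt0).
split => [B_inj K K_skew KP0|K_eq0 Z /(hessL_eq0 P_def gam_ge0 Z q_gt0)[]]; last exact: K_eq0.
by apply/B_inj/(hessL_eq0 P_def).
Qed.
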